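(* Consider the networked feedback system described in the context, under the input assumption stated there, and let $d(k)=\sum_{i=0}^{\tau}\omega(k,k-i)u(k-i)$. Then for all integers $k_1,k_2\ge0$, $\mathbb E\{v(k_1)d(k_2)\}=0$.
   Context: Setting: $P$ is a SISO discrete-time LTI plant which is strictly proper (relative degree $\ge1$), $K$ a proper SISO LTI controller. Let $\tau\ge0$ be an integer, $\mathcal D=\{0,\dots,\tau\}$, and $\{\tau_n\}$ an i.i.d. sequence with values in $\mathcal D$, $\Pr\{\tau_n=i\}=p_i$, $\sum_ip_i=1$. With real weights $\alpha_0,\dots,\alpha_\tau$ and Kronecker delta $\delta$, the channel maps $u$ to $u_d(k)=\sum_{i=0}^{\tau}\alpha_i\delta(\tau_{k-i}-i)u(k-i)$. Closed loop: plant input $v-u_d$, plant output $y$, $u=Ky$; signals real, system at rest at $k=0$ (signals vanish for $k<0$). Define $\omega(k,n)=\alpha_{k-n}[\delta(\tau_n-(k-n))-p_{k-n}]$ if $n\le k\le n+\tau$ and $\omega(k,n)=0$ otherwise. Input assumption: $\{\tau_n\}$ is independent of $\{v(k)\}$, and $\{v(k)\}$ is zero-mean white noise (independent values) with bounded variances. *)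

From HB Require Import structures.
From mathcomp Require Import all_boot all_order all_algebra.
From mathcomp Require Import all_classical all_reals all_analysis.
Set Implicit Arguments. Unset Strict Implicit. Unset Printing Implicit Defensive.
Import Order.TTheory GRing.Theory Num.Theory.
Local Open Scope ring_scope.
Local Open Scope classical_set_scope.

Section defs.
Context {d : measure_display} {T : measurableType d} {R : realType}.

Definition rv_events {d'} {T' : measurableType d'} (X : T -> T') : set (set T) :=
  fun A => exists2 B : set T', measurable B & A = X @^-1` B.

Definition indep_family (P : probability T R) (I : eqType)
    (E : I -> set (set T)) : Prop :=
  forall (s : seq I) (A : I -> set T), uniq s ->
    (forall j, j \in s -> E j (A j)) ->
    P (\big[setI/setT]_(j <- s) A j) = (\prod_(j <- s) P (A j))%E.

(* independence of two families of event classes (of the sigma-algebras they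
   jointly generate), stated on the generating pi-system of finite
   intersections *)
Definition indep_families (P : probability T R) (I J : eqType)
    (E : I -> set (set T)) (F : J -> set (set T)) : Prop :=
  forall (s : seq I) (s' : seq J) (A : I -> set T) (B : J -> set T),
    (forall i, i \in s -> E i (A i)) ->
    (forall j, j \in s' -> F j (B j)) ->
    P (\big[setI/setT]_(i <- s) A i `&` \big[setI/setT]_(j <- s') B j) =
    (P (\big[setI/setT]_(i <- s) A i) * P (\big[setI/setT]_(j <- s') B j))%E.

Definition omega (tau : nat) (alpha p : nat -> R) (tauseq : nat -> T -> nat)
    (k n : nat) (t : T) : R :=
  if (leq n k && leq k (addn n tau))
  then alpha (subn k n) * ((tauseq n t == subn k n)%:R - p (subn k n))
  else 0.

(* channel output u_d(k) = sum_{i=0}^tau alpha_i delta(tau_{k-i} - i) u(k-i),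
   terms with k - i < 0 vanish (system at rest) *)
Definition channel_out (tau : nat) (alpha : nat -> R) (tauseq : nat -> T -> nat)
    (u : nat -> T -> R) (k : nat) (t : T) : R :=
  \sum_(i < tau.+1 | leq i k)
     alpha i * (tauseq (subn k i) t == i)%:R * u (subn k i) t.

Definition dsig (tau : nat) (alpha p : nat -> R) (tauseq : nat -> T -> nat)
    (u : nat -> T -> R) (k : nat) (t : T) : R :=
  \sum_(i < tau.+1 | leq i k)
     omega tau alpha p tauseq k (subn k i) t * u (subn k i) t.

End defs.

From HB Require Import structures.
From mathcomp Require Import all_boot all_order all_algebra.
From mathcomp Require Import all_classical all_reals all_analysis.
From mathcomp Require Import measurable_realfun ring lra zify.
Import Order.TTheory GRing.Theory Num.Theory.
Local Open Scope ring_scope.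
Local Open Scope classical_set_scope.

(* Unrolling the loop, every control input u(n) is a finite combination of
   terms c 1{tau_0 in B_0, ..., tau_(n-1) in B_(n-1)} v(k): since the plant is
   strictly proper, the delays tau_n, tau_(n+1), ... have not yet acted on u(n).
   With omega(k, n) = alpha_i (1{tau_n = i} - p_i), the product v(k1) d(k2) is
   then a combination of terms (1{C, tau_n = i} - p_i 1{C}) v(k) v(k1), C a
   cylinder event in tau_0, ..., tau_(n-1). The delays being independent of the
   noise, E[1{C'} v(k) v(k1)] = P(C') E[v(k) v(k1)]; the delays being mutually
   independent with law p, P(C, tau_n = i) = p_i P(C). So every term has mean
   zero. Finite variances make every v(k) v(k1) integrable. *)

Section measure_integrals.
Local Open Scope ereal_scope.
Context {d : measure_display} {T : measurableType d} {R : realType}.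
Variable mu : {measure set T -> \bar R}.

Lemma ge0_integral_mrestr (C : set T) (mC : measurable C) (f : T -> \bar R) :
  measurable_fun setT f -> (forall x, 0 <= f x) ->
  \int[mrestr mu mC]_x f x = \int[mu]_(x in C) f x.
Proof.
move=> mf f0.
rewrite (@ge0_negligible_integral _ _ _ (mrestr mu mC) setT (~` C)) //; last 2 first.
- exact: measurableC.
- by transitivity (mu (~` C `&` C)); [|rewrite setICl measure0].
rewrite setTD setCK; apply: eq_measure_integral => A mA AC.
by transitivity (mu (A `&` C)); [|rewrite setIidl].
Qed.

Lemma integral_natr_mul (chi : pred T) (f : T -> R) :
  \int[mu]_t ((chi t)%:R * f t)%:E = \int[mu]_(t in [set t | chi t]) (f t)%:E.
Proof.
rewrite [RHS]integral_mkcond; apply: eq_integral => t _.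
rewrite /patch; case: (boolP (chi t)) => h; first by rewrite mem_set // mul1r.
by rewrite memNset ?mul0r //; apply/negP.
Qed.

Lemma integrable_natr_mul {chi : pred T} {f : T -> R} :
  measurable [set t | chi t] -> mu.-integrable setT (fun t => (f t)%:E) ->
  mu.-integrable setT (fun t => ((chi t)%:R * f t)%:E).
Proof.
move=> mchi intf; apply: (le_integrable measurableT _ _ intf).
  apply/measurable_EFinP/measurable_funM; last exact/measurable_EFinP/(measurable_int mu).
  rewrite (_ : (fun t => _) = \1_[set t | chi t]); first exact: measurable_indic.
  by apply/funext => t; rewrite indicE; case: (boolP (chi t)) => h;
    [rewrite mem_set | rewrite memNset //; apply/negP].
move=> t _; rewrite !abse_EFin lee_fin normrM.
by rewrite -[leRHS]mul1r ler_wpM2r //; case: (chi t); rewrite ?normr1 ?normr0.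
Qed.

Lemma integrable_mul_of_sqr (f g : T -> R) :
  measurable_fun setT f -> measurable_fun setT g ->
  mu.-integrable setT (fun t => (f t * f t)%:E) ->
  mu.-integrable setT (fun t => (g t * g t)%:E) ->
  mu.-integrable setT (fun t => (f t * g t)%:E).
Proof.
move=> mf mg iff igg.
have iD := integrableD measurableT iff igg.
apply: (le_integrable measurableT _ _ iD).
  exact/measurable_EFinP/measurable_funM.
move=> t _ /=; rewrite lee_fin (@ger0_norm _ (_ + _)); last first.
  by rewrite addr_ge0 // -expr2 sqr_ge0.
by rewrite ler_norml; apply/andP; split; nra.
Qed.

End measure_integrals.

Section integral_indep_event.
Local Open Scope ereal_scope.
Context {d d1 d2 : measure_display} {T : measurableType d}
  {T1 : measurableType d1} {T2 : measurableType d2} {R : realType}.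
Variables (P : probability T R) (a : T -> T1) (b : T -> T2) (C : set T).
Hypotheses (ma : measurable_fun setT a) (mb : measurable_fun setT b)
  (mC : measurable C).
Hypothesis indep_C : forall A B, measurable A -> measurable B ->
  P ([set t | A (a t) /\ B (b t)] `&` C) = P C * P [set t | A (a t) /\ B (b t)].

Let X t := (a t, b t).
Let mX : measurable_fun setT X := measurable_fun_pair ma mb.

(* The laws of (a, b) under P restricted to C and under P scaled by P C agree
   on measurable rectangles, hence everywhere. *)
Lemma ge0_integral_indep_event (g : T1 * T2 -> \bar R) :
  measurable_fun setT g -> (forall z, 0 <= g z) ->
  \int[P]_(t in C) g (X t) = P C * \int[P]_t g (X t).
Proof.
move=> mg g0.
rewrite -ge0_integral_mrestr //; last exact: measurableT_comp.
rewrite -[LHS](@ge0_integral_pushforward _ _ _ _ _ _ mX (mrestr P mC) setT g) //.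
rewrite -[in RHS](@ge0_integral_pushforward _ _ _ _ _ _ mX P setT g) //.
have PC_ge0 : (0 <= fine (P C))%R by apply: fine_ge0.
pose r : {nonneg R} := NngNum PC_ge0.
have PCE : P C = r%:num%:E by rewrite /= fineK // fin_num_measure.
rewrite PCE -ge0_integral_mscale //.
apply: eq_measure_integral => A mA _.
apply: (measure_unique [set A `*` B | A in measurable & B in measurable]
  (fun=> setT)) => //.
- exact: measurable_prod_measurableType.
- move=> _ _ [X1 mX1 [X2 mX2 <-]] [Y1 mY1 [Y2 mY2 <-]].
  exists (X1 `&` Y1); first exact: measurableI.
  by exists (X2 `&` Y2); [exact: measurableI | rewrite setXI].
- by move=> _; exists setT => //; exists setT => //; rewrite setXTT.
- by rewrite bigcup_const.
- move=> _ [B1 mB1 [B2 mB2 <-]].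
  by transitivity (P (X @^-1` (B1 `*` B2) `&` C)); rewrite // indep_C // PCE.
- move=> _; apply: (@le_lt_trans _ _ (P (X @^-1` setT `&` C))) => //.
  apply: (le_lt_trans (probability_le1 _ _)); last exact: ltry.
  by apply: measurableI; rewrite // -[X in measurable X]setTI; exact: mX.
Qed.

Lemma integral_indep_event (g : T1 * T2 -> R) :
  measurable_fun setT g -> P.-integrable setT (fun t => (g (X t))%:E) ->
  \int[P]_(t in C) (g (X t))%:E = P C * \int[P]_t (g (X t))%:E.
Proof.
move=> mg intg; set G := fun z => (g z)%:E.
have mG : measurable_fun setT G by exact/measurable_EFinP.
rewrite integralE [in RHS]integralE.
have posE D : \int[P]_(t in D) (G \o X)^\+ t = \int[P]_(t in D) G^\+ (X t).
  by apply: eq_integral => t _; rewrite !funeposE.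
have negE D : \int[P]_(t in D) (G \o X)^\- t = \int[P]_(t in D) G^\- (X t).
  by apply: eq_integral => t _; rewrite !funenegE.
rewrite !posE !negE.
rewrite ge0_integral_indep_event; [|exact: measurable_funepos|]; last first.
  by move=> z; rewrite funeposE le_max lexx orbT.
rewrite ge0_integral_indep_event; [|exact: measurable_funeneg|]; last first.
  by move=> z; rewrite funenegE le_max lexx orbT.
rewrite [RHS]muleBr; [by [] | exact: fin_num_measure |].
by rewrite -posE -negE; exact: (integrable_add_def measurableT intg).
Qed.

End integral_indep_event.

Lemma integrable_sqr_of_variance {d : measure_display} {T : measurableType d}
    {R : realType} (P : probability T R) (X : T -> R) :
  measurable_fun setT X -> ('E_P[X] = 0)%E -> ('V_P[X] < +oo)%E ->
  P.-integrable setT (fun t => (X t * X t)%:E).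
Proof.
move=> mX EX VX; apply/integrableP; split; first exact/measurable_EFinP/measurable_funM.
suff <- : ('V_P[X] = \int[P]_t `|(X t * X t)%:E|)%E by [].
rewrite /variance covariance.unlock EX expectation.unlock; apply: eq_integral => t _ /=.
transitivity ((X t - 0) * (X t - 0))%:E; first by [].
by rewrite subr0 ger0_norm // -expr2 sqr_ge0.
Qed.

Section delay_cylinders.
Context {d : measure_display} {T : measurableType d} {R : realType}.
Variables (tauseq : nat -> T -> nat) (v : nat -> T -> R).

Definition cylinder (n : nat) (B : nat -> pred nat) (t : T) : bool :=
  all (fun m => B m (tauseq m t)) (iota 0 n).

Definition upd (B : nat -> pred nat) (n : nat) (q : pred nat) : nat -> pred nat :=
  fun m => if m == n then q else B m.

Lemma cylinder_upd_last n B q t :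
  cylinder n.+1 (upd B n q) t = cylinder n B t && q (tauseq n t).
Proof.
rewrite /cylinder -addn1 iotaD all_cat /= andbT /upd eqxx; congr andb.
by apply: eq_in_all => m; rewrite mem_iota => /andP[_ lt_mn]; rewrite ltn_eqF.
Qed.

Lemma cylinder_updI n m B c t : (m < n)%N ->
  cylinder n (upd B m (fun y => B m y && c y)) t = cylinder n B t && c (tauseq m t).
Proof.
move=> lt_mn; case cm : (c (tauseq m t)).
  rewrite andbT; apply: eq_all => j.
  by rewrite /upd; case: eqP => [->|]; rewrite ?cm ?andbT.
rewrite andbF; apply/negbTE/negP => /allP/(_ m).
by rewrite mem_iota /= lt_mn /upd eqxx cm andbF => /(_ isT).
Qed.

Lemma cylinderE n B : [set t | cylinder n B t] =
  \big[setI/setT]_(m <- iota 0 n) (tauseq m @^-1` [set x | B m x]).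
Proof.
rewrite /cylinder; elim: (iota 0 n) => [|m s IH].
  by rewrite big_nil; apply/seteqP; split.
by rewrite big_cons -IH; apply/seteqP; split => t /= => [/andP[]|[-> ->]].
Qed.

Definition cyl_sum n (s : seq (R * (nat -> pred nat) * nat)) (t : T) : R :=
  \sum_(x <- s) x.1.1 * (cylinder n x.1.2 t)%:R * v x.2 t.

Definition cyl_span n (f : T -> R) := exists s, f =1 cyl_sum n s.

Lemma eq_cyl_span {n} {f g : T -> R} : f =1 g -> cyl_span n g -> cyl_span n f.
Proof. by move=> fg [s gs]; exists s => t; rewrite fg gs. Qed.

Lemma cyl_spanD {n f g} :
  cyl_span n f -> cyl_span n g -> cyl_span n (fun t => f t + g t).
Proof.
by move=> [s1 fs1] [s2 gs2]; exists (s1 ++ s2) => t; rewrite fs1 gs2 /cyl_sum big_cat.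
Qed.

Lemma cyl_spanZ {n} c {f} : cyl_span n f -> cyl_span n (fun t => c * f t).
Proof.
move=> [s fs]; exists [seq (c * x.1.1, x.1.2, x.2) | x <- s] => t.
by rewrite fs /cyl_sum big_map mulr_sumr; apply: eq_bigr => x _; rewrite !mulrA.
Qed.

Lemma cyl_span_sum n {I : Type} (r : seq I) (P : pred I) (F : I -> T -> R) :
  (forall i, P i -> cyl_span n (F i)) ->
  cyl_span n (fun t => \sum_(i <- r | P i) F i t).
Proof.
move=> spanF; elim: r => [|i r IH].
  by exists [::] => t; rewrite /cyl_sum !big_nil.
rewrite /=; case Pi : (P i); last by apply: (eq_cyl_span _ IH) => t; rewrite big_cons Pi.
by apply: (eq_cyl_span _ (cyl_spanD (spanF i Pi) IH)) => t; rewrite big_cons Pi.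
Qed.

Lemma cyl_span_noise {n} k : cyl_span n (v k).
Proof.
exists [:: (1, fun _ => xpredT, k)] => t.
by rewrite /cyl_sum big_seq1 /cylinder all_predT !mul1r.
Qed.

Lemma cyl_spanS {n f} : cyl_span n f -> cyl_span n.+1 f.
Proof.
move=> [s fs]; exists [seq (x.1.1, upd x.1.2 n xpredT, x.2) | x <- s] => t.
by rewrite fs /cyl_sum big_map; apply: eq_bigr => x _; rewrite cylinder_upd_last andbT.
Qed.

Lemma cyl_span_widen {m n f} : (m <= n)%N -> cyl_span m f -> cyl_span n f.
Proof.
move=> /subnK <-; elim: (n - m)%N => [|k IH] spanf; first by rewrite add0n.
by rewrite addSn; apply/cyl_spanS/IH.
Qed.

Lemma cyl_span_indic {n} m i {f} : (m < n)%N -> cyl_span n f ->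
  cyl_span n (fun t => (tauseq m t == i)%:R * f t).
Proof.
move=> lt_mn [s fs].
exists [seq (x.1.1, upd x.1.2 m (fun y => x.1.2 m y && (y == i)), x.2) | x <- s] => t.
rewrite fs /cyl_sum big_map mulr_sumr; apply: eq_bigr => x _ /=.
rewrite cylinder_updI //.
by case: (cylinder n x.1.2 t); case: (tauseq m t == i) => /=; ring.
Qed.

Lemma cyl_span_mulmx {n p q} (A : 'M[R]_(p, q)) {X : T -> 'cV[R]_q} :
  (forall j, cyl_span n (fun t => X t j ord0)) ->
  forall i, cyl_span n (fun t => (A *m X t) i ord0).
Proof.
move=> spanX i; apply: (eq_cyl_span _ (cyl_span_sum _ (index_enum _) xpredT
  (fun j t => A i j * X t j ord0) _)) => [t|j _]; first by rewrite mxE.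
exact: cyl_spanZ.
Qed.

Section closed_loop.
Context {np : nat} {Ap : 'M[R]_np} {Bp : 'cV[R]_np} {Cp : 'rV[R]_np}
  {nc : nat} {Ak : 'M[R]_nc} {Bk : 'cV[R]_nc} {Ck : 'rV[R]_nc} {Dk : R}
  {tau : nat} {alpha : nat -> R}
  {xp : nat -> T -> 'cV[R]_np} {xc : nat -> T -> 'cV[R]_nc}
  {y u ud : nat -> T -> R}.
Hypotheses (xp0 : forall t, xp 0%N t = 0) (xc0 : forall t, xc 0%N t = 0)
  (xpS : forall k t, xp k.+1 t = Ap *m xp k t + (v k t - ud k t) *: Bp)
  (yE : forall k t, y k t = (Cp *m xp k t) ord0 ord0)
  (xcS : forall k t, xc k.+1 t = Ak *m xc k t + y k t *: Bk)
  (uE : forall k t, u k t = (Ck *m xc k t) ord0 ord0 + Dk * y k t)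
  (udE : forall k t, ud k t = channel_out tau alpha tauseq u k t).

Definition state_in_cyl_span k :=
  (forall i, cyl_span k (fun t => xp k t i ord0)) /\
  (forall i, cyl_span k (fun t => xc k t i ord0)).

Lemma input_in_cyl_span k : state_in_cyl_span k -> cyl_span k (u k).
Proof.
move=> [spanp spanc].
apply: (eq_cyl_span _ (cyl_spanD (cyl_span_mulmx Ck spanc ord0)
  (cyl_spanZ Dk (cyl_span_mulmx Cp spanp ord0)))) => t.
by rewrite uE yE.
Qed.

Lemma channel_out_in_cyl_span k :
  (forall j, (j <= k)%N -> cyl_span j (u j)) -> cyl_span k.+1 (ud k).
Proof.
move=> spanu.
apply: (eq_cyl_span _ (cyl_span_sum _ (index_enum _) (fun i : 'I_tau.+1 => (i <= k)%N)
  (fun i t => alpha i * ((tauseq (k - i) t == i)%:R * u (k - i)%N t)) _)).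
  by move=> t; rewrite udE; apply: eq_bigr => i _; rewrite mulrA.
move=> i le_ik; apply/cyl_spanZ/cyl_span_indic; first by rewrite ltnS leq_subr.
by apply: (cyl_span_widen (leq_trans (leq_subr _ _) (leqnSn k))); apply/spanu/leq_subr.
Qed.

Lemma state_in_cyl_spanS k :
  (forall j, (j <= k)%N -> state_in_cyl_span j) -> state_in_cyl_span k.+1.
Proof.
move=> spanj; have [spanp spanc] := spanj k (leqnn k).
have spanp' j := cyl_spanS (spanp j).
have spanc' j := cyl_spanS (spanc j).
have spanud := channel_out_in_cyl_span k
  (fun j le_jk => input_in_cyl_span j (spanj j le_jk)).
have spany : cyl_span k.+1 (y k).
  by apply: (eq_cyl_span _ (cyl_span_mulmx Cp spanp' ord0)) => t; rewrite yE.
split => i.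
  apply: (eq_cyl_span _ (cyl_spanD (cyl_span_mulmx Ap spanp' i)
    (cyl_spanZ (Bp i ord0) (cyl_spanD (cyl_span_noise k) (cyl_spanZ (-1) spanud))))).
  by move=> t; rewrite xpS !mxE; ring.
apply: (eq_cyl_span _ (cyl_spanD (cyl_span_mulmx Ak spanc' i)
  (cyl_spanZ (Bk i ord0) spany))).
by move=> t; rewrite xcS !mxE mulrC.
Qed.

Lemma input_in_cyl_span_all k : cyl_span k (u k).
Proof.
apply: input_in_cyl_span; elim/ltn_ind: k => -[_ | k spank].
  by split=> i; exists [::] => t; rewrite /cyl_sum big_nil (xp0, xc0) mxE.
by apply: state_in_cyl_spanS => j le_jk; apply: spank.
Qed.

End closed_loop.

Lemma omega_window tau (alpha p : nat -> R) k i t :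
  (i <= k)%N -> (i <= tau)%N ->
  omega tau alpha p tauseq k (k - i) t = alpha i * ((tauseq (k - i) t == i)%:R - p i).
Proof.
move=> le_ik le_itau.
by rewrite /omega leq_subr subKn // (_ : (k <= k - i + tau)%N = true) //; lia.
Qed.

Section expectation.
Local Open Scope ereal_scope.
Context {P : probability T R} {tau : nat} {p : nat -> R}.
Hypotheses (mtau : forall n, measurable_fun setT (tauseq n))
  (tau_law : forall n i, (i <= tau)%N -> P [set t | tauseq n t = i] = (p i)%:E)
  (indep_tau : indep_family P (fun n => rv_events (tauseq n)))
  (mv : forall k, measurable_fun setT (v k))
  (v_mean0 : forall k, 'E_P[v k] = 0)
  (v_var : forall k, 'V_P[v k] < +oo)
  (indep_tau_v : indep_families P (fun n => rv_events (tauseq n))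
                                  (fun k => rv_events (v k))).

Lemma measurable_cylinder n B : measurable [set t | cylinder n B t].
Proof.
rewrite cylinderE; apply: bigsetI_measurable => m _.
by rewrite -[X in measurable X]setTI; apply: mtau.
Qed.

Lemma integrable_noise_mul a b : P.-integrable setT (fun t => (v a t * v b t)%:E).
Proof. by apply: integrable_mul_of_sqr; rewrite ?integrable_sqr_of_variance. Qed.

Lemma indep_cylinder_noise n B a b A1 A2 : measurable A1 -> measurable A2 ->
  P ([set t | A1 (v a t) /\ A2 (v b t)] `&` [set t | cylinder n B t]) =
  P [set t | cylinder n B t] * P [set t | A1 (v a t) /\ A2 (v b t)].
Proof.
move=> mA1 mA2; rewrite cylinderE setIC.
have cylB m : m \in iota 0 n -> rv_events (tauseq m) (tauseq m @^-1` [set x | B m x]).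
  by move=> _; exists [set x | B m x].
have [<-|neq_ab] := eqVneq a b.
  have := indep_tau_v (iota 0 n) [:: a] _ (fun=> v a @^-1` (A1 `&` A2)) cylB.
  rewrite big_seq1; apply => j; rewrite inE => /eqP ->.
  by exists (A1 `&` A2); rewrite //; exact: measurableI.
have := indep_tau_v (iota 0 n) [:: a; b] _
  (fun j => if j == a then v a @^-1` A1 else v b @^-1` A2) cylB.
rewrite big_cons big_seq1 eqxx eq_sym (negbTE neq_ab); apply => j.
rewrite !inE => /orP[] /eqP ->; first by rewrite eqxx; exists A1.
by rewrite eq_sym (negbTE neq_ab); exists A2.
Qed.

Lemma prob_cylinder_upd_pred1 n B i : (i <= tau)%N ->
  P [set t | cylinder n.+1 (upd B n (pred1 i)) t] =
  (p i)%:E * P [set t | cylinder n B t].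
Proof.
move=> le_itau.
rewrite !cylinderE indep_tau ?iota_uniq //; last first.
  by move=> m _; exists [set x | upd B n (pred1 i) m x].
rewrite indep_tau ?iota_uniq //; last by move=> m _; exists [set x | B m x].
rewrite -addn1 iotaD big_cat /= big_seq1 /upd eqxx muleC; congr (_ * _).
  by rewrite add0n -(tau_law n i le_itau); congr (P _); apply/seteqP; split => t /= /eqP.
apply: eq_big_seq => m; rewrite mem_iota => /andP[_ lt_mn].
by rewrite ltn_eqF.
Qed.

Definition centered (f : T -> R) :=
  P.-integrable setT (fun t => (f t)%:E) /\ \int[P]_t (f t)%:E = 0.

Lemma eq_centered {f g : T -> R} : f =1 g -> centered g -> centered f.
Proof. by move=> /funext ->. Qed.

Lemma centeredD {f g} : centered f -> centered g -> centered (fun t => f t + g t)%R.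
Proof.
move=> [intf f0] [intg g0]; split.
  by apply: eq_integrable (integrableD _ intf intg) => // t _; rewrite EFinD.
by under eq_integral do rewrite EFinD; rewrite integralD // f0 g0 adde0.
Qed.

Lemma centeredZ c {f} : centered f -> centered (fun t => c * f t)%R.
Proof.
move=> [intf f0]; split.
  by apply: eq_integrable (integrableZl _ c intf) => // t _; rewrite EFinM.
by under eq_integral do rewrite EFinM; rewrite integralZl // f0 mule0.
Qed.

Lemma centered_sum (I : Type) (r : seq I) (Q : pred I) (F : I -> T -> R) :
  (forall i, Q i -> centered (F i)) -> centered (fun t => \sum_(i <- r | Q i) F i t)%R.
Proof.
move=> cF; elim: r => [|i r IH].
  under eq_fun do rewrite big_nil.
  by split; [exact: integrable0 | exact: integral0].
under eq_fun do rewrite big_cons.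
by case Qi : (Q i) => //; apply: centeredD => //; exact: cF.
Qed.

Lemma integral_cylinder_noise n B a b :
  \int[P]_t ((cylinder n B t)%:R * (v a t * v b t))%:E =
  P [set t | cylinder n B t] * \int[P]_t (v a t * v b t)%:E.
Proof.
rewrite integral_natr_mul.
apply: (integral_indep_event _ _ _ _ (mv a) (mv b) (measurable_cylinder n B)
  (indep_cylinder_noise n B a b) (fun z : R * R => z.1 * z.2)%R).
  exact: measurable_funM.
exact: integrable_noise_mul.
Qed.

Lemma centered_innovation n B i a b : (i <= tau)%N ->
  centered (fun t => ((cylinder n.+1 (upd B n (pred1 i)) t)%:R
                      - p i * (cylinder n B t)%:R) * (v a t * v b t))%R.
Proof.
move=> le_itau.
have intC m B' :=
  integrable_natr_mul P (measurable_cylinder m B') (integrable_noise_mul a b).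
have intpC := integrableZl measurableT (p i) (intC n B).
have diffE t : (((cylinder n.+1 (upd B n (pred1 i)) t)%:R - p i * (cylinder n B t)%:R)
      * (v a t * v b t))%:E =
    ((cylinder n.+1 (upd B n (pred1 i)) t)%:R * (v a t * v b t))%:E
    - (p i)%:E * ((cylinder n B t)%:R * (v a t * v b t))%:E.
  by rewrite -EFinM -EFinB; congr EFin; ring.
split.
  by apply: eq_integrable (integrableB _ (intC _ _) intpC) => // t _; rewrite diffE.
under eq_integral do rewrite diffE.
rewrite integralB // integralZl // !integral_cylinder_noise prob_cylinder_upd_pred1 //.
rewrite -muleA subee // !fin_numM ?fin_num_measure //; first exact: measurable_cylinder.
exact: integrable_fin_num (integrable_noise_mul a b).
Qed.

Lemma centered_noise_mul_dsig (alpha : nat -> R) (u : nat -> T -> R) k1 k2 :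
  (forall n, cyl_span n (u n)) ->
  centered (fun t => v k1 t * dsig tau alpha p tauseq u k2 t)%R.
Proof.
move=> spanu; rewrite /dsig.
under eq_fun do rewrite mulr_sumr.
apply: centered_sum => -[i lt_itau] /= le_ik2; set n := (k2 - i)%N.
have [s us] := spanu n.
under eq_fun do rewrite omega_window // us /cyl_sum !mulr_sumr.
apply: centered_sum => -[[c B] k] _; rewrite /=.
apply: (eq_centered _ (centeredZ (alpha i * c)
  (centered_innovation n B i k1 k lt_itau))) => t.
rewrite cylinder_upd_last /=.
by case: (cylinder n B t); case: (tauseq n t == i) => /=; ring.
Qed.

End expectation.

End delay_cylinders.

Theorem lemma6 (R : realType) (d : measure_display) (T : measurableType d)
  (P : probability T R)
  (* plant P (strictly proper: state space with zero feedthrough) *)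
  (np : nat) (Ap : 'M[R]_np) (Bp : 'cV[R]_np) (Cp : 'rV[R]_np)
  (* controller K (proper: state space with feedthrough Dk) *)
  (nc : nat) (Ak : 'M[R]_nc) (Bk : 'cV[R]_nc) (Ck : 'rV[R]_nc) (Dk : R)
  (* channel *)
  (tau : nat) (p alpha : nat -> R) (tauseq : nat -> T -> nat)
  (* exogenous input and closed-loop signals *)
  (v : nat -> T -> R)
  (xp : nat -> T -> 'cV[R]_np) (xc : nat -> T -> 'cV[R]_nc)
  (y u ud : nat -> T -> R) :
  (* {tau_n}: i.i.d. with values in {0,...,tau}, Pr{tau_n = i} = p_i *)
  (forall n, measurable_fun setT (tauseq n)) ->
  (forall n t, (tauseq n t <= tau)%N) ->
  (forall n i, (i <= tau)%N -> P [set t | tauseq n t = i] = (p i)%:E) ->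
  \sum_(i < tau.+1) p i = 1 ->
  indep_family P (fun n => rv_events (tauseq n)) ->
  (* {v(k)}: zero-mean white noise with bounded variances *)
  (forall k, measurable_fun setT (v k)) ->
  indep_family P (fun k => rv_events (v k)) ->
  (forall k, ('E_P[v k] = 0)%E) ->
  (exists M : R, forall k, ('V_P[v k] <= M%:E)%E) ->
  (* {tau_n} independent of {v(k)} *)
  indep_families P (fun n => rv_events (tauseq n)) (fun k => rv_events (v k)) ->
  (* closed loop, at rest at k = 0 *)
  (forall t, xp 0%N t = 0) ->
  (forall t, xc 0%N t = 0) ->
  (forall k t, xp k.+1 t = Ap *m xp k t + (v k t - ud k t) *: Bp) ->
  (forall k t, y k t = (Cp *m xp k t) ord0 ord0) ->
  (forall k t, xc k.+1 t = Ak *m xc k t + y k t *: Bk) ->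
  (forall k t, u k t = (Ck *m xc k t) ord0 ord0 + Dk * y k t) ->
  (forall k t, ud k t = channel_out tau alpha tauseq u k t) ->
  forall k1 k2 : nat,
    P.-integrable setT
      (fun t => (v k1 t * dsig tau alpha p tauseq u k2 t)%:E) /\
    ('E_P[fun t => (v k1 t * dsig tau alpha p tauseq u k2 t)%R] = 0)%E.
Proof.
move=> mtau _ tau_law _ indep_tau mv _ v_mean0 [M v_varM] indep_tau_v.
move=> xp0 xc0 xpS yE xcS uE udE k1 k2.
have v_var k : ('V_P[v k] < +oo)%E by apply: le_lt_trans (v_varM k) (ltry M).
have spanu := input_in_cyl_span_all tauseq v xp0 xc0 xpS yE xcS uE udE.
have [int_vd mean_vd] := centered_noise_mul_dsig tauseq v mtau tau_law indep_tau mv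
  v_mean0 v_var indep_tau_v alpha u k1 k2 spanu.
by split; rewrite // unlock.
Qed.
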